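(* Consider the closed-loop battery recycling model described in the context, and assume the data satisfy: the demands $d$, supplies $s$, costs $c$, values $v$, probabilities $p$ and material coefficients $\Delta$ are nonnegative, $u^{\mathrm{REC}}>0$, $u^{\mathrm{CP}}>0$, $\gamma\in[0,1)$, and every facility cost function $f$ is concave and monotonically increasing on $[0,\infty)$ with $f(0)=0$. Let $\overline{y}=(\overline{y}^{\mathrm{REC}},\overline{y}^{\mathrm{CP}})\geq 0$ satisfy the capacity-monotonicity constraints (Cap3), (Cap4) and the upper bounds (Cap5), (Cap6). Then there exists $x\geq 0$ such that $(\overline{y},x)$ satisfies all of the production constraints (Prod1)–(Prod5), the inventory constraints (Inv1)–(Inv4), and the capacity constraints (Cap1)–(Cap6); i.e. $\{(y,x)\geq 0 : (\mathrm{Prod}),(\mathrm{Inv}),(\mathrm{Cap}),\ y=\overline{y}\}\neq\emptyset$.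
   Context: Index sets (all finite): battery chemistries $\mathcal{I}$; recycling processes $\mathcal{J}$; materials $\mathcal{K}$ with a subset of cathode powders $\mathcal{K}^{\mathrm{CP}}\subseteq\mathcal{K}$; zones $\mathcal{Z}$; time periods $\mathcal{T}=\{1,\dots,T\}$; planning periods $\mathcal{L}=\{1,\dots,L\}$, where $\{\mathcal{T}_l\}_{l\in\mathcal{L}}$ is a partition of $\mathcal{T}$; stages $\mathcal{S}=\{1,\dots,S\}$, with $\sigma_t\in\mathcal{S}$ the stage of period $t\in\mathcal{T}\cup\{0\}$. For each stage $\sigma$, $\Omega_\sigma$ is a finite nonempty set of scenario-tree nodes. For each node $\omega$ there is an ancestor map $a_\omega$ assigning to each $t\in\mathcal{T}\cup\{0\}$ a node $a_\omega(t)\in\Omega_{\sigma_t}$, with $a_\omega(t)=\omega$ whenever $\omega\in\Omega_{\sigma_t}$. For each $l\in\mathcal{L}$ there is a positive integer $N^{\mathrm{REC}}_l$ with $\mathcal{N}^{\mathrm{REC}}_l=\{1,\dots,N^{\mathrm{REC}}_l\}$, and for each $l\in\mathcal{L},k\in\mathcal{K}^{\mathrm{CP}}$ a positive integer $N^{\mathrm{CP}}_{l,k}$ with $\mathcal{N}^{\mathrm{CP}}_{l,k}=\{1,\dots,N^{\mathrm{CP}}_{l,k}\}$. Data: $\Delta^{\mathrm{NB}}_{i,k}$ ($i\in\mathcal{I},k\in\mathcal{K}$), $\Delta^{\mathrm{CP}}_{k',k}$ ($k'\in\mathcal{K}^{\mathrm{CP}},k\in\mathcal{K}\setminus\mathcal{K}^{\mathrm{CP}}$),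 $\Delta^{\mathrm{MC}}_{k',k}$ ($k',k\in\mathcal{K}\setminus\mathcal{K}^{\mathrm{CP}}$), $\Delta^{\mathrm{REC}}_{k,i,j}$ ($k\in\mathcal{K},i\in\mathcal{I},j\in\mathcal{J}$); demand $d_{\omega,z,t,i}$ and retired-battery supply $s_{\omega,z,t,i}$ for $t\in\mathcal{T}$, $\omega\in\Omega_{\sigma_t}$; maximum capacities $u^{\mathrm{REC}},u^{\mathrm{CP}}$. Operational variables (indexed by $t\in\mathcal{T}$, $z\in\mathcal{Z}$, $\omega\in\Omega_{\sigma_t}$, plus $t=0$ for inventories): $x^{\mathrm{NM,NB}}_{\omega,z,t,k},x^{\mathrm{RM,INV}}_{\omega,z,t,k},x^{\mathrm{RM,S}}_{\omega,z,t,k},x^{\mathrm{INV}}_{\omega,z,t,k}$ ($k\in\mathcal{K}$); $x^{\mathrm{INV,NB}}_{\omega,z,t,k},x^{\mathrm{CP,INV}}_{\omega,z,t,k}$ ($k\in\mathcal{K}^{\mathrm{CP}}$); $x^{\mathrm{NM,CP}}_{\omega,z,t,k},x^{\mathrm{MC,CP}}_{\omega,z,t,k},x^{\mathrm{INV,MC}}_{\omega,z,t,k}$ ($k\in\mathcal{K}\setminus\mathcal{K}^{\mathrm{CP}}$); $x^{\mathrm{RB}}_{\omega,z,t,i}$ ($i\in\mathcal{I}$); $x^{\mathrm{RB,RM}}_{\omega,z,t,i,j}$; transports $x^{\mathrm{TR,RM}}_{\omega,z,z',t,k}$ and $x^{\mathrm{TR,RB}}_{\omega,z,z',t,i}$ for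 $z'\neq z$. Capacity variables: $y^{\mathrm{REC}}_{z,l,j,n}$ ($n\in\mathcal{N}^{\mathrm{REC}}_l$) and $y^{\mathrm{CP}}_{z,l,k,n}$ ($k\in\mathcal{K}^{\mathrm{CP}}$, $n\in\mathcal{N}^{\mathrm{CP}}_{l,k}$). Production constraints, for all $t\in\mathcal{T},z\in\mathcal{Z},\omega\in\Omega_{\sigma_t}$: (Prod1) $\sum_{i}\Delta^{\mathrm{NB}}_{i,k}d_{\omega,z,t,i}=x^{\mathrm{NM,NB}}_{\omega,z,t,k}+x^{\mathrm{INV,NB}}_{\omega,z,t,k}$ for $k\in\mathcal{K}^{\mathrm{CP}}$; (Prod2) $\sum_{i}\Delta^{\mathrm{NB}}_{i,k}d_{\omega,z,t,i}=x^{\mathrm{NM,NB}}_{\omega,z,t,k}$ for $k\in\mathcal{K}\setminus\mathcal{K}^{\mathrm{CP}}$; (Prod3) $\sum_{k'\in\mathcal{K}^{\mathrm{CP}}}\Delta^{\mathrm{CP}}_{k',k}x^{\mathrm{CP,INV}}_{\omega,z,t,k'}=x^{\mathrm{NM,CP}}_{\omega,z,t,k}+x^{\mathrm{MC,CP}}_{\omega,z,t,k}$ for $k\in\mathcal{K}\setminus\mathcal{K}^{\mathrm{CP}}$; (Prod4) $\sum_{k'\in\mathcal{K}\setminus\mathcal{K}^{\mathrm{CP}}}\Delta^{\mathrm{MC}}_{k',k}x^{\mathrm{MC,CP}}_{\omega,z,t,k'}=x^{\mathrm{INV,MC}}_{\omega,z,t,k}$ for $k\in\mathcal{K}\setminus\mathcal{K}^{\mathrm{CP}}$;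 (Prod5) $x^{\mathrm{RM,INV}}_{\omega,z,t,k}+x^{\mathrm{RM,S}}_{\omega,z,t,k}=\sum_{i,j}\Delta^{\mathrm{REC}}_{k,i,j}x^{\mathrm{RB,RM}}_{\omega,z,t,i,j}$ for $k\in\mathcal{K}$. Inventory constraints: (Inv1) $x^{\mathrm{RB}}_{\omega,z,0,i}=0$ and (Inv2) $x^{\mathrm{INV}}_{\omega,z,0,k}=0$ for all $\omega\in\Omega_{\sigma_0}$; and for all $t\in\mathcal{T},z,\omega\in\Omega_{\sigma_t}$, with $\omega'=a_\omega(t-1)$: (Inv3) $x^{\mathrm{RB}}_{\omega,z,t,i}=x^{\mathrm{RB}}_{\omega',z,t-1,i}+\sum_{z'\neq z}(x^{\mathrm{TR,RB}}_{\omega,z',z,t,i}-x^{\mathrm{TR,RB}}_{\omega,z,z',t,i})+s_{\omega,z,t,i}-\sum_{j}x^{\mathrm{RB,RM}}_{\omega,z,t,i,j}$; (Inv4) for $k\in\mathcal{K}\setminus\mathcal{K}^{\mathrm{CP}}$: $x^{\mathrm{INV}}_{\omega,z,t,k}=x^{\mathrm{INV}}_{\omega',z,t-1,k}+\sum_{z'\neq z}(x^{\mathrm{TR,RM}}_{\omega,z',z,t,k}-x^{\mathrm{TR,RM}}_{\omega,z,z',t,k})+x^{\mathrm{RM,INV}}_{\omega,z,t,k}-x^{\mathrm{INV,MC}}_{\omega,z,t,k}$, and for $k\in\mathcal{K}^{\mathrm{CP}}$: $x^{\mathrm{INV}}_{\omega,z,t,k}=x^{\mathrm{INV}}_{\omega',z,t-1,k}+\sum_{z'\neq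 z}(x^{\mathrm{TR,RM}}_{\omega,z',z,t,k}-x^{\mathrm{TR,RM}}_{\omega,z,z',t,k})+x^{\mathrm{RM,INV}}_{\omega,z,t,k}+x^{\mathrm{CP,INV}}_{\omega,z,t,k}-x^{\mathrm{INV,NB}}_{\omega,z,t,k}$. Capacity constraints: (Cap1) $\sum_{n\in\mathcal{N}^{\mathrm{REC}}_l}y^{\mathrm{REC}}_{z,l,j,n}\geq\sum_i x^{\mathrm{RB,RM}}_{\omega,z,t,i,j}$ for all $j,l,t\in\mathcal{T}_l,z,\omega\in\Omega_{\sigma_t}$; (Cap2) $\sum_{n\in\mathcal{N}^{\mathrm{CP}}_{l,k}}y^{\mathrm{CP}}_{z,l,k,n}\geq x^{\mathrm{CP,INV}}_{\omega,z,t,k}$ for all $k\in\mathcal{K}^{\mathrm{CP}},l,t\in\mathcal{T}_l,z,\omega\in\Omega_{\sigma_t}$; (Cap3) $\sum_{n\in\mathcal{N}^{\mathrm{REC}}_l}y^{\mathrm{REC}}_{z,l,j,n}\geq\sum_{n\in\mathcal{N}^{\mathrm{REC}}_{l-1}}y^{\mathrm{REC}}_{z,l-1,j,n}$ for $l\geq2$; (Cap4) $\sum_{n\in\mathcal{N}^{\mathrm{CP}}_{l,k}}y^{\mathrm{CP}}_{z,l,k,n}\geq\sum_{n\in\mathcal{N}^{\mathrm{CP}}_{l-1,k}}y^{\mathrm{CP}}_{z,l-1,k,n}$ for $l\geq2$; (Cap5) $y^{\mathrm{REC}}_{z,l,j,n}\leq u^{\mathrm{REC}}$; (Cap6) $y^{\mathrm{CP}}_{z,l,k,n}\leq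 u^{\mathrm{CP}}$. *)

From HB Require Import structures.
From mathcomp Require Import all_boot all_order all_algebra.
Set Implicit Arguments. Unset Strict Implicit. Unset Printing Implicit Defensive.
Import Order.TTheory GRing.Theory Num.Theory.
Local Open Scope ring_scope.

(* Time periods are the naturals 1..T (plus 0 for initial inventories),
   planning periods are 1..L, stages 1..S.  Scenario-tree nodes are the
   elements of a finite type [Node]; stg w is the stage of node w, so
   Omega_sigma = [set w | stg w = sigma].  anc w t is the ancestor a_w(t). *)

Section Model.
Variables (R : realFieldType) (I J K Z Node : finType).
Variable KCP : {set K}.
Variables (T L S : nat).
Variable sigma : nat -> nat.            (* stage of time period t *)
Variable stg : Node -> nat.
Variable anc : Node -> nat -> Node.
Variable lof : nat -> nat.              (* t \in T_l  <->  lof t = l *)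
Variables (NREC : nat -> nat) (NCP : nat -> K -> nat).

Definition inT (t : nat) := (1 <= t <= T)%N.
Definition inT0 (t : nat) := (t <= T)%N.
Definition inL (l : nat) := (1 <= l <= L)%N.

Definition index_ok : Prop :=
  [/\ (forall t, inT0 t -> (1 <= sigma t <= S)%N),
      (forall sg, (1 <= sg <= S)%N -> exists w : Node, stg w = sg),
      (forall w t, inT0 t -> stg (anc w t) = sigma t),
      (forall w t, inT0 t -> stg w = sigma t -> anc w t = w) &
    [/\ (forall t, inT t -> inL (lof t)),
      (forall l, inL l -> (0 < NREC l)%N) &
      (forall l k, inL l -> k \in KCP -> (0 < NCP l k)%N)]].

Record opvars := OpVars {
  xNMNB : Node -> Z -> nat -> K -> R;
  xRMINV : Node -> Z -> nat -> K -> R;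
  xRMS : Node -> Z -> nat -> K -> R;
  xINV : Node -> Z -> nat -> K -> R;
  xINVNB : Node -> Z -> nat -> K -> R;   (* used for k \in KCP *)
  xCPINV : Node -> Z -> nat -> K -> R;   (* used for k \in KCP *)
  xNMCP : Node -> Z -> nat -> K -> R;    (* used for k \notin KCP *)
  xMCCP : Node -> Z -> nat -> K -> R;    (* used for k \notin KCP *)
  xINVMC : Node -> Z -> nat -> K -> R;   (* used for k \notin KCP *)
  xRB : Node -> Z -> nat -> I -> R;
  xRBRM : Node -> Z -> nat -> I -> J -> R;
  xTRRM : Node -> Z -> Z -> nat -> K -> R;  (* from z to z' *)
  xTRRB : Node -> Z -> Z -> nat -> I -> R   (* from z to z' *)
}.

Definition x_nonneg (x : opvars) : Prop :=
  (forall t w z, inT t -> stg w = sigma t ->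
     [/\ (forall k, [/\ 0 <= xNMNB x w z t k, 0 <= xRMINV x w z t k &
                      0 <= xRMS x w z t k]),
         (forall k, k \in KCP -> 0 <= xINVNB x w z t k /\ 0 <= xCPINV x w z t k),
         (forall k, k \notin KCP ->
            [/\ 0 <= xNMCP x w z t k, 0 <= xMCCP x w z t k & 0 <= xINVMC x w z t k]),
         (forall i j, 0 <= xRBRM x w z t i j) &
         (forall z', z' != z -> (forall k, 0 <= xTRRM x w z z' t k) /\
                               (forall i, 0 <= xTRRB x w z z' t i))]) /\
  (forall t w z, inT0 t -> stg w = sigma t ->
     (forall k, 0 <= xINV x w z t k) /\ (forall i, 0 <= xRB x w z t i)).

Variables (DNB : I -> K -> R) (DCP : K -> K -> R) (DMC : K -> K -> R)
          (DREC : K -> I -> J -> R).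
Variables (d s : Node -> Z -> nat -> I -> R).
Variables (uREC uCP : R).

Definition prod_constraints (x : opvars) : Prop :=
  forall t z w, inT t -> stg w = sigma t ->
  [/\ (forall k, k \in KCP ->
         \sum_i DNB i k * d w z t i = xNMNB x w z t k + xINVNB x w z t k),
      (forall k, k \notin KCP ->
         \sum_i DNB i k * d w z t i = xNMNB x w z t k),
      (forall k, k \notin KCP ->
         \sum_(k' in KCP) DCP k' k * xCPINV x w z t k'
           = xNMCP x w z t k + xMCCP x w z t k),
      (forall k, k \notin KCP ->
         \sum_(k' | k' \notin KCP) DMC k' k * xMCCP x w z t k' = xINVMC x w z t k) &
      (forall k, xRMINV x w z t k + xRMS x w z t k
         = \sum_i \sum_j DREC k i j * xRBRM x w z t i j)].

Definition inv_constraints (x : opvars) : Prop :=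
  [/\ (forall w z i, stg w = sigma 0 -> xRB x w z 0 i = 0),
      (forall w z k, stg w = sigma 0 -> xINV x w z 0 k = 0),
      (forall t z w i, inT t -> stg w = sigma t ->
         xRB x w z t i = xRB x (anc w t.-1) z t.-1 i
           + \sum_(z' | z' != z) (xTRRB x w z' z t i - xTRRB x w z z' t i)
           + s w z t i - \sum_j xRBRM x w z t i j) &
      (forall t z w k, inT t -> stg w = sigma t ->
         xINV x w z t k = xINV x (anc w t.-1) z t.-1 k
           + \sum_(z' | z' != z) (xTRRM x w z' z t k - xTRRM x w z z' t k)
           + xRMINV x w z t k
           + (if k \in KCP then xCPINV x w z t k - xINVNB x w z t k
              else - xINVMC x w z t k))].

Definition sumREC (yREC : Z -> nat -> J -> nat -> R) z l j :=
  \sum_(1 <= n < (NREC l).+1) yREC z l j n.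
Definition sumCP (yCP : Z -> nat -> K -> nat -> R) z l k :=
  \sum_(1 <= n < (NCP l k).+1) yCP z l k n.

(* (Cap3)-(Cap6): the constraints involving only y *)
Definition cap_y_constraints (yREC : Z -> nat -> J -> nat -> R)
    (yCP : Z -> nat -> K -> nat -> R) : Prop :=
  [/\ (forall z l j, (2 <= l <= L)%N -> sumREC yREC z l j >= sumREC yREC z l.-1 j),
      (forall z l k, (2 <= l <= L)%N -> k \in KCP ->
          sumCP yCP z l k >= sumCP yCP z l.-1 k),
      (forall z l j n, inL l -> (1 <= n <= NREC l)%N -> yREC z l j n <= uREC) &
      (forall z l k n, inL l -> k \in KCP -> (1 <= n <= NCP l k)%N ->
          yCP z l k n <= uCP)].

Definition cap_constraints (yREC : Z -> nat -> J -> nat -> R)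
    (yCP : Z -> nat -> K -> nat -> R) (x : opvars) : Prop :=
  [/\ (forall j l t z w, inL l -> inT t -> lof t = l -> stg w = sigma t ->
         sumREC yREC z l j >= \sum_i xRBRM x w z t i j),
      (forall k l t z w, k \in KCP -> inL l -> inT t -> lof t = l -> stg w = sigma t ->
         sumCP yCP z l k >= xCPINV x w z t k) &
      cap_y_constraints yREC yCP].

Definition y_nonneg (yREC : Z -> nat -> J -> nat -> R)
    (yCP : Z -> nat -> K -> nat -> R) : Prop :=
  (forall z l j n, inL l -> (1 <= n <= NREC l)%N -> 0 <= yREC z l j n) /\
  (forall z l k n, inL l -> k \in KCP -> (1 <= n <= NCP l k)%N -> 0 <= yCP z l k n).

Definition data_ok : Prop :=
  [/\ (forall i k, 0 <= DNB i k),
      (forall k' k, k' \in KCP -> k \notin KCP -> 0 <= DCP k' k),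
      (forall k' k, k' \notin KCP -> k \notin KCP -> 0 <= DMC k' k),
      (forall k i j, 0 <= DREC k i j) /\
      (forall t w z i, inT t -> stg w = sigma t -> 0 <= d w z t i /\ 0 <= s w z t i) &
      0 < uREC /\ 0 < uCP].

End Model.

From mathcomp Require Import all_boot all_order all_algebra.
Set Implicit Arguments. Unset Strict Implicit. Unset Printing Implicit Defensive.
Import Order.TTheory GRing.Theory Num.Theory.
Local Open Scope ring_scope.

(* The recycling network need not be used at all: buy every material needed
   for new batteries as new material, recycle nothing, transport nothing and
   stockpile every retired battery.  The battery inventory is then the supply
   accumulated along the ancestors of the scenario node, hence nonnegative,
   and every capacity constraint (Cap1), (Cap2) only asks the installed
   capacity to be nonnegative. *)

Section Stockpile.
Variables (R : realFieldType) (I Z Node : finType).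
Variables (anc : Node -> nat -> Node) (s : Node -> Z -> nat -> I -> R).

Fixpoint stockpile (w : Node) (z : Z) (t : nat) (i : I) {struct t} : R :=
  if t is t'.+1 then stockpile (anc w t') z t' i + s w z t i else 0.

Variables (T : nat) (sigma : nat -> nat) (stg : Node -> nat).
Hypothesis anc_stage : forall w t, inT0 T t -> stg (anc w t) = sigma t.
Hypothesis s_ge0 : forall t w z i, inT T t -> stg w = sigma t -> 0 <= s w z t i.

Lemma stockpile_ge0 w z t i : inT0 T t -> stg w = sigma t -> 0 <= stockpile w z t i.
Proof.
elim: t w => [//|t IHt] w Ht Hw /=.
have Ht' : inT0 T t by exact: ltnW.
by rewrite addr_ge0 ?IHt ?anc_stage ?s_ge0.
Qed.

End Stockpile.

Section NoRecycling.
Variables (R : realFieldType) (I J K Z Node : finType) (KCP : {set K}).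
Variables (T L : nat) (sigma lof : nat -> nat) (stg : Node -> nat).
Variables (anc : Node -> nat -> Node) (NREC : nat -> nat) (NCP : nat -> K -> nat).
Variables (DNB : I -> K -> R) (DCP DMC : K -> K -> R) (DREC : K -> I -> J -> R).
Variables (d s : Node -> Z -> nat -> I -> R) (uREC uCP : R).

Definition no_recycling_plan : opvars R I J K Z Node :=
  let nothing := fun _ _ _ _ => 0 in
  OpVars (fun w z t k => \sum_i DNB i k * d w z t i)
    nothing nothing nothing nothing nothing nothing nothing nothing
    (stockpile anc s) (fun _ _ _ _ _ => 0) (fun _ _ _ _ _ => 0) (fun _ _ _ _ _ => 0).

Lemma no_recycling_nonneg :
  (forall i k, 0 <= DNB i k) ->
  (forall t w z i, inT T t -> stg w = sigma t -> 0 <= d w z t i /\ 0 <= s w z t i) ->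
  (forall w t, inT0 T t -> stg (anc w t) = sigma t) ->
  x_nonneg KCP T sigma stg no_recycling_plan.
Proof.
move=> DNB_ge0 ds_ge0 anc_stage; split=> t w z Ht Hw /=.
  split=> // k; split=> //; apply: sumr_ge0 => i _.
  by rewrite mulr_ge0 //; case: (ds_ge0 t w z i Ht Hw).
split=> // i; apply: (stockpile_ge0 anc_stage) => // t' w' z' i' Ht' Hw'.
by case: (ds_ge0 t' w' z' i' Ht' Hw').
Qed.

Lemma no_recycling_prod :
  prod_constraints KCP T sigma stg DNB DCP DMC DREC d no_recycling_plan.
Proof.
move=> t z w _ _; split=> //= [k _|k _|k _|k]; rewrite ?addr0 //.
- by rewrite big1 // => k' _; rewrite mulr0.
- by rewrite big1 // => k' _; rewrite mulr0.
- by rewrite big1 // => i _; rewrite big1 // => j _; rewrite mulr0.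
Qed.

Lemma no_recycling_inv : inv_constraints KCP T sigma stg anc s no_recycling_plan.
Proof.
have no_transport : \sum_(z' : Z | z' != _) ((0 : R) - 0) = 0.
  by move=> z; rewrite big1 // => z' _; rewrite subr0.
split=> // [[//|t] z w i|t z w k] _ _ /=; rewrite no_transport addr0.
  by rewrite big1 ?subr0.
by case: (k \in KCP); rewrite ?subr0 ?oppr0 !addr0.
Qed.

Lemma sumREC_ge0 (yREC : Z -> nat -> J -> nat -> R) (yCP : Z -> nat -> K -> nat -> R) z l j :
  y_nonneg KCP L NREC NCP yREC yCP -> inL L l -> 0 <= sumREC NREC yREC z l j.
Proof.
case=> yREC_ge0 _ Hl; rewrite /sumREC big_nat; apply: sumr_ge0 => n /andP[n_ge1 n_le].
by apply: yREC_ge0; rewrite // n_ge1 -ltnS.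
Qed.

Lemma sumCP_ge0 (yREC : Z -> nat -> J -> nat -> R) (yCP : Z -> nat -> K -> nat -> R) z l k :
  y_nonneg KCP L NREC NCP yREC yCP -> inL L l -> k \in KCP -> 0 <= sumCP NCP yCP z l k.
Proof.
case=> _ yCP_ge0 Hl Hk; rewrite /sumCP big_nat; apply: sumr_ge0 => n /andP[n_ge1 n_le].
by apply: yCP_ge0; rewrite // n_ge1 -ltnS.
Qed.

Lemma no_recycling_cap (yREC : Z -> nat -> J -> nat -> R) (yCP : Z -> nat -> K -> nat -> R) :
  y_nonneg KCP L NREC NCP yREC yCP -> cap_y_constraints KCP L NREC NCP uREC uCP yREC yCP ->
  cap_constraints KCP T L sigma stg lof NREC NCP uREC uCP yREC yCP no_recycling_plan.
Proof.
move=> Hy0 Hy; split=> //= [j l t z w Hl _ _ _|k l t z w Hk Hl _ _ _].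
  by rewrite big1 // (sumREC_ge0 _ _ Hy0 Hl).
exact: sumCP_ge0 Hy0 Hl Hk.
Qed.

End NoRecycling.

Theorem proposition1
  (R : realFieldType) (I J K Z Node : finType) (KCP : {set K})
  (T L S : nat) (sigma : nat -> nat) (stg : Node -> nat)
  (anc : Node -> nat -> Node) (lof : nat -> nat)
  (NREC : nat -> nat) (NCP : nat -> K -> nat)
  (DNB : I -> K -> R) (DCP DMC : K -> K -> R) (DREC : K -> I -> J -> R)
  (d s : Node -> Z -> nat -> I -> R) (uREC uCP gamma : R)
  (Hidx : index_ok KCP T L S sigma stg anc lof NREC NCP)
  (Hdata : data_ok KCP T sigma stg DNB DCP DMC DREC d s uREC uCP)
  (Hgamma : 0 <= gamma < 1)
  (yREC : Z -> nat -> J -> nat -> R) (yCP : Z -> nat -> K -> nat -> R)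
  (Hy0 : y_nonneg KCP L NREC NCP yREC yCP)
  (Hy : cap_y_constraints KCP L NREC NCP uREC uCP yREC yCP) :
  exists x : opvars R I J K Z Node,
    [/\ x_nonneg KCP T sigma stg x,
        prod_constraints KCP T sigma stg DNB DCP DMC DREC d x,
        inv_constraints KCP T sigma stg anc s x &
        cap_constraints KCP T L sigma stg lof NREC NCP uREC uCP yREC yCP x].
Proof.
case: Hidx => _ _ anc_stage _ _.
case: Hdata => DNB_ge0 _ _ [_ ds_ge0] _.
exists (no_recycling_plan J anc DNB d s); split.
- exact: no_recycling_nonneg.
- exact: no_recycling_prod.
- exact: no_recycling_inv.
- exact: no_recycling_cap.
Qed.
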